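(* Let $d$ be a positive even integer, $n=\frac{d^2}{2}$, and $P_m(x)=1+x+\cdots+x^{m-1}\in\mathbb{F}_2[x]$. Then: (1) $P_{d+1}(x)$ is invertible modulo $x^n-1$, with $$P_{d+1}(x)^{-1}\equiv x\big(1+x^{d+1}+x^{2(d+1)}+\cdots+x^{(\frac d2-1)(d+1)}\big)+x^{\frac d2+1}\big(1+x^{d+1}+\cdots+x^{(\frac d2-2)(d+1)}\big)\pmod{x^n-1},$$ and $\mathrm{wt}(P_{d+1}(x)^{-1})=d-1$. (2) Modulo $x^n-1$, $$P_n(x)\equiv P_{d+1}(x)\,x^{\frac d2+1}\big(1+x^{d+1}+\cdots+x^{(\frac d2-2)(d+1)}\big)+\big(1+x+x^2+\cdots+x^{\frac d2}\big)$$ and $$P_n(x)\equiv P_{d+1}(x)^{-1}\big(1+x+\cdots+x^{\frac d2-1}\big)+\big(1+x^{d+1}+x^{2(d+1)}+\cdots+x^{(\frac d2-1)(d+1)}\big).$$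
   Context: Weight is the number of nonzero coefficients of the representative of degree $<n$; an empty sum is $0$. *)

From mathcomp Require Import all_boot all_order all_algebra.
Set Implicit Arguments. Unset Strict Implicit. Unset Printing Implicit Defensive.
Import GRing.Theory.
Local Open Scope ring_scope.

Notation F2poly := {poly 'F_2}.

Definition Pm (m : nat) : F2poly := \sum_(i < m) 'X^i.

Definition xn1 (n : nat) : F2poly := 'X^n - 1.

Definition congr_mod (n : nat) (p q : F2poly) : Prop := p %% xn1 n = q %% xn1 n.

Definition inv_mod (n : nat) (p q : F2poly) : Prop := congr_mod n (p * q) 1.

Definition wt_mod (n : nat) (p : F2poly) : nat :=
  count (fun c : 'F_2 => c != 0) (polyseq (p %% xn1 n)).

From mathcomp Require Import all_boot all_order all_algebra.
From mathcomp Require Import ring zify.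
Set Implicit Arguments.
Unset Strict Implicit.
Unset Printing Implicit Defensive.

(* Write h = d/2 and Y = X^(d+1), so that (X - 1) P_(d+1) = Y - 1 and A, B are
   geometric sums in Y.  Since Y^h = X^n X^h and X^(h+1) Y^(h-1) = X^n, multiplying
   by X - 1 turns each claimed congruence into an exact identity in F_2[X], e.g.
   P_(d+1) Q = 1 + (X^n - 1) P_(h+1); the factor X - 1 is cancelled in the domain
   F_2[X], never modulo X^n - 1, where it is a zero divisor.  Inverses modulo X^n - 1
   are unique up to congruence, and Q is a sum of 2h - 1 distinct monomials of degree
   below n, which gives the weight.  The last congruence follows from the identity
   P_(d+1) (P_n + A) = P_h + (X^n - 1) P_h P_(h+1) after multiplying by an inverse. *)

Import GRing.Theory.
Local Open Scope ring_scope.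

Lemma natr2_F2poly : 2%:R = 0 :> F2poly.
Proof.
have two0 : 2%:R = 0 :> 'F_2 by apply/eqP; rewrite (pcharf0 (pchar_Fp _)).
by rewrite -(rmorph_nat (@polyC _)) two0.
Qed.

(* With these two rules, [ring: natr2_F2poly oppr1_F2poly] proves identities that
   hold in characteristic 2. *)
Lemma oppr1_F2poly : -1 = 1 :> F2poly.
Proof. by apply/eqP; rewrite eq_sym -subr_eq0 opprK -mulr2n natr2_F2poly. Qed.

Lemma coef_sumXn (R : nzRingType) (s : seq nat) (i : nat) :
  (\sum_(e <- s) 'X^e : {poly R})`_i = (count_mem i s)%:R.
Proof.
elim: s => [|e s IHs]; first by rewrite big_nil coef0.
by rewrite big_cons coefD IHs coefXn /= natrD eq_sym.
Qed.

Lemma size_sumXn_leq (R : nzRingType) (s : seq nat) (m : nat) :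
  all (fun e => e < m)%N s -> (size (\sum_(e <- s) 'X^e : {poly R})%R <= m)%N.
Proof.
move=> /allP s_lt_m; apply/leq_sizeP => j le_mj.
rewrite coef_sumXn (count_memPn _) //.
by apply: contraTN le_mj => /s_lt_m; rewrite -ltnNge.
Qed.

Lemma count_coef_sumXn (R : nzRingType) (s : seq nat) : uniq s ->
  count (fun c : R => c != 0) (\sum_(e <- s) 'X^e : {poly R}) = size s.
Proof.
move=> s_uniq; set p := \sum_(e <- s) 'X^e : {poly R}.
have coef_p i : (p`_i != 0) = (i \in s).
  by rewrite coef_sumXn count_uniq_mem //; case: (i \in s); rewrite ?oner_eq0 ?eqxx.
rewrite -[polyseq p](mkseq_nth 0) count_map -size_filter.
apply/perm_size/uniq_perm; rewrite ?filter_uniq ?iota_uniq // => i.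
rewrite mem_filter mem_iota /= coef_p andb_idr // => i_s.
by apply: contraTT i_s; rewrite -leqNgt -coef_p => /(nth_default 0) ->; rewrite eqxx.
Qed.

Section CongruenceModXn1.
Variable n : nat.

Lemma congr_modE (p q : F2poly) : congr_mod n p q <-> xn1 n %| p - q.
Proof.
rewrite /congr_mod; split => [pq | /modp_eq0P pq].
  by apply/modp_eq0P; rewrite modpD modpN pq subrr.
by rewrite -[p](subrK q) modpD pq add0r.
Qed.

Lemma inv_mod_uniq (p q q' : F2poly) :
  inv_mod n p q -> inv_mod n p q' -> congr_mod n q q'.
Proof.
move=> /congr_modE pq /congr_modE pq'; apply/congr_modE.
have -> : q - q' = q' * (p * q - 1) - q * (p * q' - 1) by ring.
by rewrite dvdp_sub ?dvdp_mull.
Qed.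

Lemma congr_mod_wt (p q : F2poly) : congr_mod n p q -> wt_mod n p = wt_mod n q.
Proof. by rewrite /wt_mod => ->. Qed.

Lemma wt_mod_sumXn (s : seq nat) : (0 < n)%N -> uniq s ->
  all (fun e => e < n)%N s -> wt_mod n (\sum_(e <- s) 'X^e) = size s.
Proof.
move=> n_gt0 s_uniq s_lt_n; rewrite /wt_mod modp_small ?count_coef_sumXn //.
by rewrite /xn1 -polyC1 size_XnsubC // ltnS size_sumXn_leq.
Qed.

End CongruenceModXn1.

Lemma mulXsub1_Pm (k : nat) : ('X - 1) * Pm k = 'X^k - 1.
Proof. by rewrite /Pm subrX1. Qed.

Lemma PmD (a b : nat) : Pm (a + b) = Pm a + 'X^a * Pm b.
Proof.
rewrite /Pm big_split_ord mulr_sumr; congr (_ + _).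
by apply: eq_bigr => i _; rewrite exprD.
Qed.

Lemma Pm1 : Pm 1 = 1.
Proof. by rewrite /Pm big_ord1 expr0. Qed.

Lemma mulXsub1_sum_Xn (R : nzRingType) (k m : nat) :
  ('X^m - 1) * \sum_(i < k) 'X^(i * m) = 'X^(k * m) - 1 :> {poly R}.
Proof.
rewrite [in RHS]mulnC exprM [in RHS]subrX1; congr (_ * _).
by apply: eq_bigr => i _; rewrite mulnC exprM.
Qed.

Lemma Xsub1_neq0 : 'X - 1 != 0 :> F2poly.
Proof. by rewrite -polyC1 polyXsubC_eq0. Qed.

Section InversePm.
(* d = 2h and n = d^2/2 = 2h^2. *)
Variable h : nat.
Hypothesis h_gt0 : (0 < h)%N.

Local Notation n := (h * h).*2.
Local Notation P := (Pm h.*2.+1).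
Local Notation A := (\sum_(i < h) 'X^(i * h.*2.+1) : F2poly).
Local Notation B := (\sum_(i < h - 1) 'X^(i * h.*2.+1) : F2poly).
Local Notation Z := ('X^((h - 1) * h.*2.+1) : F2poly).
Local Notation Q := ('X * A + 'X^(h.+1) * B).

Let mulXsub1_A : ('X^(h.*2.+1) - 1) * A = 'X^n * 'X^h - 1.
Proof.
rewrite mulXsub1_sum_Xn -exprD; congr ('X^_ - 1); lia.
Qed.

Let mulXsub1_B : ('X^(h.*2.+1) - 1) * B = Z - 1.
Proof. exact: mulXsub1_sum_Xn. Qed.

Let mulXSh_Z : 'X^(h.+1) * Z = 'X^n.
Proof. rewrite -exprD; congr 'X^_; nia. Qed.

Let mulX_Xh : 'X * 'X^h = 'X^(h.+1) :> F2poly.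
Proof. by rewrite exprS. Qed.

Let P_decomp : P = Pm h + 'X^h * (1 + 'X * Pm h).
Proof. by rewrite -addnn -addnS PmD -[h.+1]add1n PmD Pm1 expr1. Qed.

Lemma mul_Pm_Q : P * Q = 1 + xn1 n * Pm h.+1.
Proof.
apply: (mulfI Xsub1_neq0); rewrite mulrA mulXsub1_Pm.
have -> : ('X^(h.*2.+1) - 1) * Q =
    'X * (('X^(h.*2.+1) - 1) * A) + 'X^(h.+1) * (('X^(h.*2.+1) - 1) * B) by ring.
have -> : ('X - 1) * (1 + xn1 n * Pm h.+1) =
    'X - 1 + xn1 n * (('X - 1) * Pm h.+1) by ring.
rewrite mulXsub1_A mulXsub1_B mulXsub1_Pm /xn1.
ring: natr2_F2poly oppr1_F2poly mulXSh_Z mulX_Xh.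
Qed.

Lemma Pm_n_decomp : Pm n = P * ('X^(h.+1) * B) + Pm h.+1.
Proof.
apply: (mulfI Xsub1_neq0); rewrite mulXsub1_Pm.
have -> : ('X - 1) * (P * ('X^(h.+1) * B) + Pm h.+1) =
    'X^(h.+1) * ((('X - 1) * P) * B) + ('X - 1) * Pm h.+1 by ring.
by rewrite !mulXsub1_Pm mulXsub1_B mulrBr mulXSh_Z mulr1 addrA subrK.
Qed.

Lemma mul_Pm_PmnA : P * (Pm n + A) = Pm h + xn1 n * (Pm h * Pm h.+1).
Proof.
apply: (mulfI Xsub1_neq0).
have -> : ('X - 1) * (P * (Pm n + A)) =
    P * (('X - 1) * Pm n) + (('X - 1) * P) * A by ring.
have -> : ('X - 1) * (Pm h + xn1 n * (Pm h * Pm h.+1)) =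
    ('X - 1) * Pm h + xn1 n * Pm h * (('X - 1) * Pm h.+1) by ring.
rewrite !mulXsub1_Pm mulXsub1_A P_decomp /xn1.
ring: natr2_F2poly oppr1_F2poly mulX_Xh.
Qed.

Lemma inv_mod_Q : inv_mod n P Q.
Proof. by apply/congr_modE; rewrite mul_Pm_Q addrAC subrr add0r dvdp_mulIl. Qed.

Lemma Pm_n_congr (q : F2poly) : inv_mod n P q -> congr_mod n (Pm n) (q * Pm h + A).
Proof.
move=> /congr_modE Pq; apply/congr_modE.
have -> : Pm n - (q * Pm h + A) =
    (P * q - 1) * (Pm n + A) - q * (P * (Pm n + A) - Pm h).
  by ring: natr2_F2poly oppr1_F2poly.
rewrite mul_Pm_PmnA addrAC subrr add0r.
by apply: dvdp_sub; [apply: dvdp_mulr | apply/dvdp_mull/dvdp_mulIl].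
Qed.

Let Q_exponents := ([seq (i * h.*2.+1).+1 | i <- iota 0 h] ++
                    [seq h.+1 + i * h.*2.+1 | i <- iota 0 (h - 1)])%N.

Let Q_sumXn : Q = \sum_(e <- Q_exponents) 'X^e.
Proof.
have iota0 k : iota 0 k = index_iota 0 k by rewrite /index_iota subn0.
rewrite big_cat !big_map !iota0 !big_mkord !mulr_sumr.
by congr (_ + _); apply: eq_bigr => i _; [rewrite exprS | rewrite exprD].
Qed.

Let Q_exponents_uniq : uniq Q_exponents.
Proof.
rewrite cat_uniq !map_inj_uniq ?iota_uniq /= ?andbT.
- apply/hasPn => _ /mapP [j _ ->]; apply/mapP => -[i _] /eqP.
  by apply/negP; case: (leqP i j) => ij; nia.
- by move=> i j /eqP; rewrite eqn_add2l eqn_pmul2r // => /eqP.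
- by move=> i j /eqP; rewrite eqSS eqn_pmul2r // => /eqP.
Qed.

Let Q_exponents_lt : all (fun e => e < n)%N Q_exponents.
Proof.
by rewrite all_cat; apply/andP; split; apply/allP => e /mapP [i];
  rewrite mem_iota add0n => /andP [_ lt_ih] ->; nia.
Qed.

Lemma wt_mod_Q : wt_mod n Q = (h.*2 - 1)%N.
Proof.
rewrite Q_sumXn wt_mod_sumXn //; last by rewrite double_gt0 muln_gt0 h_gt0.
by rewrite size_cat !size_map !size_iota; lia.
Qed.

End InversePm.

Theorem lemma3 (d : nat) (hd : (0 < d)%N) (heven : ~~ odd d) :
  let n := (d ^ 2)./2 in
  let A : F2poly := \sum_(i < d./2) 'X^(i * d.+1) in
  let B : F2poly := \sum_(i < d./2 - 1) 'X^(i * d.+1) in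
  let Q : F2poly := 'X * A + 'X^((d./2).+1) * B in
  (* (1) invertibility, the explicit inverse, and its weight *)
  (exists q : F2poly, inv_mod n (Pm d.+1) q) /\
  (forall q : F2poly, inv_mod n (Pm d.+1) q ->
      congr_mod n q Q /\ wt_mod n q = (d - 1)%N) /\
  (* (2) the two congruences for P_n *)
  congr_mod n (Pm n) (Pm d.+1 * ('X^((d./2).+1) * B) + Pm (d./2).+1) /\
  (forall q : F2poly, inv_mod n (Pm d.+1) q ->
      congr_mod n (Pm n) (q * Pm (d./2) + A)).
Proof.
have [h d_eq] : exists h, d = h.*2.
  by exists d./2; rewrite -[d in LHS]odd_double_half (negbTE heven).
subst d.
have h_gt0 : (0 < h)%N by rewrite -double_gt0.
have -> : ((h.*2) ^ 2)./2 = (h * h).*2 by rewrite -mulnn -doubleMl -doubleMr doubleK.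
rewrite doubleK => n A B Q.
have Q_inv := inv_mod_Q h_gt0.
split; first by exists Q.
split=> [q q_inv | ].
  have q_Q := inv_mod_uniq q_inv Q_inv.
  by split; rewrite // (congr_mod_wt q_Q) (wt_mod_Q h_gt0).
split; first by rewrite /congr_mod (Pm_n_decomp h_gt0).
exact: Pm_n_congr h_gt0.
Qed.
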